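(* Under the assumptions of the context, there exist a neighborhood $U$ of $\bar\xi$ and $\varepsilon>0$ such that for every $\xi\in U$ there is $j\in\{1,2,3\}$ with \[ \varepsilon^{-1}|\nu_j(\xi)|\ge\alpha(\xi), \] where $\nu_1(\xi),\nu_2(\xi),\nu_3(\xi)$ are the (complex) roots in $t$ of $t^3+a_1(\xi)t^2+a_2(\xi)t+a_3(\xi)=0$.
   Context: Let $a(t,\xi),b(t,\xi)$ be real-valued $C^\infty$ functions on $(-c,T)\times(\mathbb R^n\setminus\{0\})$, homogeneous of degree $0$ in $\xi$, with $\Delta:=4a^3-27b^2\ge0$ for $t\in[0,T)$. Let $|\bar\xi|=1$ with $a(0,\bar\xi)=0$, $\partial_ta(0,\bar\xi)\ne0$. Near $(0,\bar\xi)$ write $a(t,\xi)=e_1(t,\xi)(t+\alpha(\xi))$ with $e_1>0$ smooth and $\alpha$ smooth, $\alpha(\bar\xi)=0$, $\alpha\ge0$ near $\bar\xi$, and $\Delta(t,\xi)=e_2(t,\xi)\{t^3+a_1(\xi)t^2+a_2(\xi)t+a_3(\xi)\}$ with $e_2>0$ smooth and $a_j$ smooth real-valued, $a_j(\bar\xi)=0$. *)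

From mathcomp Require Import all_boot all_order all_algebra.
From mathcomp Require Import all_classical all_reals all_analysis.
From mathcomp Require Export complex.
Export GRing.Theory Num.Theory.
Import numFieldNormedType.Exports.
Set Implicit Arguments.
Unset Strict Implicit.
Unset Printing Implicit Defensive.
Local Open Scope ring_scope.
Local Open Scope classical_set_scope.

Fixpoint Ck {R : realType} {V : normedModType R} (k : nat) (D : set V)
  (f : V -> R) : Prop :=
  match k with
  | 0 => forall x, D x -> {for x, continuous f}
  | k'.+1 => (forall x, D x -> forall v : V, derivable f x v) /\
             (forall v : V, Ck k' D ('D_v f))
  end.

Definition smooth_on {R : realType} {V : normedModType R} (D : set V)
  (f : V -> R) : Prop := forall k, Ck k D f.

Definition txdom {R : realType} (n : nat) (c T : R) : set (R * 'rV[R]_n) :=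
  [set p | - c < p.1 < T /\ p.2 != 0].

Definition disc {R : realType} {X : Type} (a b : X -> R) : X -> R :=
  fun p => 4 * a p ^+ 3 - 27 * b p ^+ 2.

Definition eucl2 {R : realType} (n : nat) (x : 'rV[R]_n) : R :=
  \sum_(i < n) x ord0 i ^+ 2.
Arguments txdom {R} n c T _.

From mathcomp Require Import all_boot all_order all_algebra.
From mathcomp Require Import all_classical all_reals all_analysis.
From mathcomp Require Import complex.
From mathcomp Require Import ring lra.
Import Order.TTheory GRing.Theory Num.Theory.
Import numFieldNormedType.Exports.
Local Open Scope ring_scope.
Local Open Scope classical_set_scope.

(* Take eps = 10^-4 and write A = alpha(xi).  Combining the two factorisations
   gives 27 b^2 = 4 a^3 - Delta = 4 e1^3 (t + A)^3 - e2 p_xi(t).  On the ray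
   xi = xb this reads 27 b^2 = (4 e1^3 - e2) t^3, so e2 = 4 e1^3 =: 4 k at
   (0, xb), and by continuity e1^3 ~ k, e2 ~ 4 k near (0, xb).  If all roots of
   p_xi had modulus at most eps A, Vieta would give p_xi(t) = t^3 + O(eps A^3)
   on [-A, A], hence 27 b^2 ~ 4 k A^3, 4 k A^3, 28 k A^3 at t = -A, 0, A.  But
   b is C^2 in t, so b(-A) + b(A) - 2 b(0) = O(A^2) is negligible against
   A^(3/2) when A is small, and no choice of signs satisfies
   +-1 +- sqrt 7 = +-2: a contradiction. *)

Section TimeDirection.
Context {R : realType} {n : nat}.

Definition tdir : R * 'rV[R]_n := (1, 0).

Lemma tdir_quotient (f : R * 'rV[R]_n -> R) t xi :
  (fun h : R => h^-1 *: ((f \o shift (t, xi)) (h *: tdir) - f (t, xi))) =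
  (fun h : R => h^-1 *: (((fun s => f (s, xi)) \o shift t) (h *: 1)
                         - f (t, xi))).
Proof.
apply: funext => h /=; congr (_ *: (f _ - _)).
by rewrite /tdir; congr pair => /=; rewrite ?scaler0 ?add0r.
Qed.

Lemma is_derive_slice (f : R * 'rV[R]_n -> R) t xi :
  derivable f (t, xi) tdir ->
  is_derive t 1 (fun s => f (s, xi)) ('D_tdir f (t, xi)).
Proof.
move=> df; apply: DeriveDef; first by rewrite /derivable -tdir_quotient.
by rewrite /derive -tdir_quotient.
Qed.

End TimeDirection.

Section SecondDifference.
Context {R : realType}.

Lemma mvt_sym_interval {g g1 : R -> R} {r a b : R} :
  (forall s, -r < s < r -> is_derive s 1 g (g1 s)) ->
  -r < a -> a < b -> b < r ->
  exists2 m, a < m < b & g b - g a = g1 m * (b - a).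
Proof.
move=> dg ra ab br.
have in_r x : a <= x <= b -> -r < x < r.
  by case/andP=> ax xb; rewrite (lt_le_trans ra ax) (le_lt_trans xb br).
have cg : {within `[a, b], continuous g}.
  apply: derivable_within_continuous => x; rewrite in_itv /= => /in_r.
  by case/dg.
have [x|m] := @MVT R g g1 a b ab _ cg.
  by rewrite in_itv /= => /andP[ax xb]; apply/dg/in_r; rewrite !ltW.
by rewrite in_itv /=; exists m.
Qed.

Lemma second_difference_bound {g g1 g2 : R -> R} {r M h : R} :
  (forall s, -r < s < r -> is_derive s 1 g (g1 s)) ->
  (forall s, -r < s < r -> is_derive s 1 g1 (g2 s)) ->
  (forall s, -r < s < r -> `|g2 s| <= M) ->
  0 < h -> h < r ->
  `|g h + g (-h) - 2 * g 0| <= 2 * M * h ^+ 2.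
Proof.
move=> dg dg1 bM h0 hr.
have r0 : 0 < r := lt_trans h0 hr.
have Nr0 : -r < 0 by rewrite oppr_lt0.
have Nrh : -r < -h by rewrite ltrN2.
have Nh0 : -h < 0 by rewrite oppr_lt0.
have [m1 /andP[m1a m1b] E1] := mvt_sym_interval dg Nr0 h0 hr.
have [m2 /andP[m2a m2b] E2] := mvt_sym_interval dg Nrh Nh0 r0.
have [m3 /andP[m3a m3b] E3] :=
  mvt_sym_interval dg1 (lt_trans Nrh m2a) (lt_trans m2b m1a) (lt_trans m1b hr).
have M3 : `|g2 m3| <= M.
  apply: bM; rewrite (lt_trans _ m3a) ?(lt_trans m3b) ?(lt_trans m1b) //.
  by rewrite (lt_trans _ m2a) ?ltrN2.
have -> : g h + g (- h) - 2 * g 0 = (g h - g 0) - (g 0 - g (- h)) by ring.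
rewrite E1 E2 subr0 sub0r opprK -mulrBl E3 !normrM (gtr0_norm h0).
have m21 : 0 < m1 - m2 by rewrite subr_gt0 (lt_trans m2b m1a).
rewrite (gtr0_norm m21).
have : `|g2 m3| * (m1 - m2) <= M * (2 * h) by apply: ler_pM => //; lra.
nra.
Qed.

End SecondDifference.

Definition cubic {K : pzRingType} (a1 a2 a3 t : K) : K :=
  t ^+ 3 + a1 * t ^+ 2 + a2 * t + a3.

Lemma cubic_vieta (F : closedFieldType) (a1 a2 a3 : F) :
  exists n1 n2 n3 : F,
  [/\ a1 = - (n1 + n2 + n3), a2 = n1 * n2 + n1 * n3 + n2 * n3
    & a3 = - (n1 * n2 * n3)].
Proof.
have [n1] := @solve_monicpoly F 3
  (fun i => if i == 0%N then - a3 else if i == 1%N then - a2 else - a1) isT.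
rewrite !big_ord_recl big_ord0 /bump /= => root1.
have e3 : a3 = - (n1 ^+ 3 + a1 * n1 ^+ 2 + a2 * n1) by rewrite root1; ring.
(* the remaining quadratic factor t^2 + u t + w *)
set u := a1 + n1; set w := a2 + n1 * u.
have [n2] := @solve_monicpoly F 2 (fun i => if i == 0%N then - w else - u) isT.
rewrite !big_ord_recl big_ord0 /bump /= => root2.
have e2 : n2 ^+ 2 = - w - u * n2 by rewrite root2; ring.
exists n1, n2, (- u - n2); split.
- by rewrite /u; ring.
- have -> : n2 * (- u - n2) = - u * n2 - n2 ^+ 2 by ring.
  by rewrite e2 /w /u; ring.
- have -> : n1 * n2 * (- u - n2) = n1 * (- u * n2 - n2 ^+ 2) by ring.
  by rewrite e2 e3 /w /u; ring.
Qed.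

Section SmallRoots.
Context {R : rcfType}.
Local Notation normc := (@Normc.normc R).

Lemma normc_real (x : R) : normc x%:C%C = `|x|.
Proof. by rewrite /Normc.normc /= expr0n /= addr0 sqrtr_sqr. Qed.

Lemma normc_ge0 (x : R[i]) : 0 <= normc x.
Proof. by case: x => a b; rewrite /Normc.normc sqrtr_ge0. Qed.

Lemma vieta_coef_bounds {a1 a2 a3 D : R} {n1 n2 n3 : R[i]} :
  a1%:C%C = - (n1 + n2 + n3) -> a2%:C%C = n1 * n2 + n1 * n3 + n2 * n3 ->
  a3%:C%C = - (n1 * n2 * n3) ->
  normc n1 <= D -> normc n2 <= D -> normc n3 <= D ->
  [/\ `|a1| <= 3 * D, `|a2| <= 3 * D ^+ 2 & `|a3| <= D ^+ 3].
Proof.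
move=> e1 e2 e3 h1 h2 h3.
have normcM2 x y : normc x <= D -> normc y <= D -> normc (x * y) <= D ^+ 2.
  by move=> hx hy; rewrite Normc.normcM expr2 ler_pM ?normc_ge0.
split; rewrite -normc_real.
- rewrite e1 normcN (le_trans (le_normcD _ _)) //.
  by have := le_normcD n1 n2; lra.
- rewrite e2 (le_trans (le_normcD _ _)) //.
  have := le_normcD (n1 * n2) (n1 * n3).
  by have := normcM2 _ _ h1 h2; have := normcM2 _ _ h1 h3;
     have := normcM2 _ _ h2 h3; lra.
- rewrite e3 normcN Normc.normcM exprSr ler_pM ?normc_ge0 //.
  exact: normcM2.
Qed.

Lemma cubic_near_cube {a1 a2 a3 A d u : R} {n1 n2 n3 : R[i]} :
  a1%:C%C = - (n1 + n2 + n3) -> a2%:C%C = n1 * n2 + n1 * n3 + n2 * n3 ->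
  a3%:C%C = - (n1 * n2 * n3) ->
  0 <= d -> d <= 1 -> 0 <= A ->
  normc n1 <= d * A -> normc n2 <= d * A -> normc n3 <= d * A -> `|u| <= A ->
  `|cubic a1 a2 a3 u - u ^+ 3| <= 7 * d * A ^+ 3.
Proof.
move=> e1 e2 e3 d0 d1 A0 h1 h2 h3 hu.
have [b1 b2 b3] := vieta_coef_bounds (D := d * A) e1 e2 e3 h1 h2 h3.
have -> : cubic a1 a2 a3 u - u ^+ 3 = a1 * u ^+ 2 + a2 * u + a3.
  by rewrite /cubic; ring.
rewrite (le_trans (ler_normD _ _)) // (le_trans (lerD (ler_normD _ _) (lexx _))) //.
rewrite !normrM ?normrX.
have dA0 : 0 <= d * A by apply: mulr_ge0.
have q1 : `|a1| * `|u| ^+ 2 <= 3 * (d * A) * A ^+ 2.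
  by rewrite ler_pM ?exprn_ge0 // lerXn2r // nnegrE.
have q2 : `|a2| * `|u| <= 3 * (d * A) ^+ 2 * A by rewrite ler_pM.
have q3 : (d * A) ^+ 3 <= d * A ^+ 3.
  by rewrite exprMn ler_wpM2r ?exprn_ge0 // !exprS expr0; nra.
have q4 : (d * A) ^+ 2 * A <= d * A ^+ 3.
  by rewrite exprMn -mulrA -exprSr ler_wpM2r ?exprn_ge0 // !exprS expr0; nra.
have -> : 7 * d * A ^+ 3 = 3 * (d * A) * A ^+ 2 + 3 * (d * A ^+ 3) + d * A ^+ 3.
  by ring.
lra.
Qed.

End SmallRoots.

Section SignObstruction.
Context {R : realFieldType}.

(* If x^2 ~ c, y^2 ~ c and z^2 ~ 7 c (relative error 1/100), then
   x + z - 2 y cannot be small: no choice of signs gives +-1 +- sqrt 7 = +-2. *)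
Lemma sign_obstruction (x y z c : R) : 0 < c ->
  `|x ^+ 2 - c| <= c / 100 -> `|y ^+ 2 - c| <= c / 100 ->
  `|z ^+ 2 - 7 * c| <= c / 100 ->
  (x + z - 2 * y) ^+ 2 <= c / (100 * 100) -> False.
Proof.
move=> c0 /ler_normlP[hx1 hx2] /ler_normlP[hy1 hy2] /ler_normlP[hz1 hz2] hr.
set r := x + z - 2 * y in hr.
(* 4 x y = S + T, where S ~ -2 c and T is small, whereas |4 x y| ~ 4 c *)
set S := 4 * y ^+ 2 + x ^+ 2 - z ^+ 2 + r ^+ 2.
set T := 2 * r * (2 * y - x).
have E : 4 * x * y = S + T by rewrite /S /T /r; ring.
have r0 : 0 <= r ^+ 2 by apply: sqr_ge0.
have hS : S ^+ 2 <= 43 / 10 * c ^+ 2.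
  have h1 : S <= 207 / 100 * c by rewrite /S; lra.
  have h2 : - (207 / 100 * c) <= S by rewrite /S; lra.
  nra.
have hT : T ^+ 2 <= c ^+ 2 / 100.
  have -> : T ^+ 2 = 4 * r ^+ 2 * (2 * y - x) ^+ 2 by rewrite /T; ring.
  have h3 : (2 * y - x) ^+ 2 <= 2 * (4 * y ^+ 2 + x ^+ 2).
    by have := sqr_ge0 (2 * y + x); lra.
  have := sqr_ge0 (2 * y - x); nra.
have hST : (S + T) ^+ 2 <= 2 * S ^+ 2 + 2 * T ^+ 2.
  by have := sqr_ge0 (S - T); lra.
have hxy : 16 * ((99 / 100 * c) ^+ 2) <= 16 * (x ^+ 2 * y ^+ 2).
  have : 0 <= 99 / 100 * c by lra.
  nra.
have : (4 * x * y) ^+ 2 = 16 * (x ^+ 2 * y ^+ 2) by ring.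
rewrite E; nra.
Qed.

Lemma product_error {x x0 y y0 ex ey : R} :
  `|x - x0| <= ex -> `|y - y0| <= ey ->
  `|x * y - x0 * y0| <= ex * `|y0| + `|x0| * ey + ex * ey.
Proof.
move=> hx hy; have ex0 : 0 <= ex := le_trans (normr_ge0 _) hx.
have -> : x * y - x0 * y0 =
    (x - x0) * y0 + x0 * (y - y0) + (x - x0) * (y - y0) by ring.
rewrite (le_trans (ler_normD _ _)) // lerD ?normrM ?ler_pM //.
rewrite (le_trans (ler_normD _ _)) // normrM normrM.
by rewrite lerD ?ler_wpM2r ?ler_wpM2l.
Qed.

Lemma three_point_contradiction {k A qm q0 qp Fm F0 Fp Gm G0 Gp bm b0 bp : R} :
  0 < k -> 0 < A ->
  `|qm - (- A ^+ 3)| <= 7 / (100 * 100) * A ^+ 3 ->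
  `|q0 - 0| <= 7 / (100 * 100) * A ^+ 3 ->
  `|qp - A ^+ 3| <= 7 / (100 * 100) * A ^+ 3 ->
  `|Fm - k| <= k / (20 * 100) -> `|F0 - k| <= k / (20 * 100) ->
  `|Fp - k| <= k / (20 * 100) ->
  `|Gm - 4 * k| <= k / 250 -> `|G0 - 4 * k| <= k / 250 ->
  `|Gp - 4 * k| <= k / 250 ->
  27 * bm ^+ 2 = 4 * Fm * (- A + A) ^+ 3 - Gm * qm ->
  27 * b0 ^+ 2 = 4 * F0 * (0 + A) ^+ 3 - G0 * q0 ->
  27 * bp ^+ 2 = 4 * Fp * (A + A) ^+ 3 - Gp * qp ->
  (bm + bp - 2 * b0) ^+ 2 <= k * A ^+ 3 / (27 * (25 * 100)) -> False.
Proof.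
move=> k0 A0 hqm hq0 hqp hFm hF0 hFp hGm hG0 hGp em e0 ep hr.
have K0 : 0 < A ^+ 3 by apply: exprn_gt0.
have {}em : 27 * bm ^+ 2 = - (Gm * qm) by rewrite em; ring.
have {}e0 : 27 * b0 ^+ 2 = 4 * F0 * A ^+ 3 - G0 * q0 by rewrite e0 add0r.
have {}ep : 27 * bp ^+ 2 = 32 * Fp * A ^+ 3 - Gp * qp by rewrite ep; ring.
set K := A ^+ 3 in K0 hqm hq0 hqp e0 ep hr *.
have k4 : `|4 * k| = 4 * k by rewrite gtr0_norm //; lra.
have pm := product_error hGm hqm; rewrite k4 normrN (gtr0_norm K0) in pm.
have p0 := product_error hG0 hq0; rewrite k4 normr0 in p0.
have pp := product_error hGp hqp; rewrite k4 (gtr0_norm K0) in pp.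
move: pm p0 pp => /ler_normlP[pm1 pm2] /ler_normlP[p01 p02] /ler_normlP[pp1 pp2].
have kK : 0 < k * K by apply: mulr_gt0.
have FK (F : R) : `|F - k| <= k / (20 * 100) ->
    `|F * K - k * K| <= k * K / (20 * 100).
  by move=> hF; rewrite -mulrBl normrM (gtr0_norm K0) mulrAC ler_wpM2r // ltW.
move: (FK _ hF0) (FK _ hFp) => /ler_normlP[F0K1 F0K2] /ler_normlP[FpK1 FpK2].
have c0 : 0 < k * K * 4 / 27 by lra.
apply: (@sign_obstruction bm b0 bp _ c0);
  try (apply/ler_normlP; split); lra.
Qed.

End SignObstruction.

Section Pointwise.
Context {R : realType}.

Lemma slice_contradiction {g g1 g2 F G : R -> R} {a1 a2 a3 k M r A : R} :
  0 < k -> 0 < A -> A < r ->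
  4 * M ^+ 2 * A <= k / (27 * (25 * 100)) ->
  (forall s, -r < s < r -> is_derive s 1 g (g1 s)) ->
  (forall s, -r < s < r -> is_derive s 1 g1 (g2 s)) ->
  (forall s, -r < s < r -> `|g2 s| <= M) ->
  (forall s, -r < s < r -> `|F s - k| <= k / (20 * 100)) ->
  (forall s, -r < s < r -> `|G s - 4 * k| <= k / 250) ->
  (forall s, -r < s < r ->
     27 * g s ^+ 2 = 4 * F s * (s + A) ^+ 3 - G s * cubic a1 a2 a3 s) ->
  (forall u, `|u| <= A ->
     `|cubic a1 a2 a3 u - u ^+ 3| <= 7 / (100 * 100) * A ^+ 3) ->
  False.
Proof.
move=> k0 A0 Ar smallA dg dg1 bM hF hG key near.
have inr s : `|s| <= A -> -r < s < r.
  by case/ler_normlP => s1 s2; apply/andP; split; lra.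
have nA : `|- A| <= A by rewrite normrN gtr0_norm.
have n0 : `|0 : R| <= A by rewrite normr0 ltW.
have pA : `|A| <= A by rewrite gtr0_norm.
have M0 : 0 <= M := le_trans (normr_ge0 _) (bM 0 (inr 0 n0)).
have hr : (g (- A) + g A - 2 * g 0) ^+ 2 <= k * A ^+ 3 / (27 * (25 * 100)).
  have sd := second_difference_bound dg dg1 bM A0 Ar.
  rewrite (addrC (g A)) in sd.
  have MA2 : 0 <= 2 * M * A ^+ 2.
    by apply: mulr_ge0; [exact: mulr_ge0 | exact: sqr_ge0].
  rewrite -real_normK ?num_real // (le_trans (lerXn2r 2 _ _ sd)) ?nnegrE //.
  have -> : (2 * M * A ^+ 2) ^+ 2 = (4 * M ^+ 2 * A) * A ^+ 3 by ring.
  by rewrite [leRHS]mulrAC ler_wpM2r // exprn_ge0 // ltW.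
have qm := near _ nA; have q0 := near _ n0; have qp := near _ pA.
rewrite (_ : (- A) ^+ 3 = - A ^+ 3) in qm; last by ring.
rewrite expr0n /= in q0.
apply: (three_point_contradiction k0 A0 qm q0 qp
  (hF _ (inr _ nA)) (hF _ (inr _ n0)) (hF _ (inr _ pA))
  (hG _ (inr _ nA)) (hG _ (inr _ n0)) (hG _ (inr _ pA))
  (key _ (inr _ nA)) (key _ (inr _ n0)) (key _ (inr _ pA)) hr).
Qed.

End Pointwise.

Lemma cube_near {R : realFieldType} (E x : R) : 0 < E ->
  `|E - x| < E / (100 * 100) -> `|x ^+ 3 - E ^+ 3| <= E ^+ 3 / (20 * 100).
Proof.
move=> E0 /ltr_normlP[h1 h2].
have -> : x ^+ 3 - E ^+ 3 = (x - E) * (x ^+ 2 + x * E + E ^+ 2) by ring.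
have x0 : 0 < x by lra.
have q0 : 0 <= x ^+ 2 + x * E + E ^+ 2.
  by rewrite !addr_ge0 ?sqr_ge0 // mulr_ge0 // ltW.
have q4 : x ^+ 2 + x * E + E ^+ 2 <= 4 * E ^+ 2.
  have xE : x <= 11 / 10 * E by lra.
  have : x * x <= (11 / 10 * E) * (11 / 10 * E) by apply: ler_pM => //; lra.
  have : x * E <= (11 / 10 * E) * E by apply: ler_wpM2r; lra.
  by rewrite !expr2; lra.
have hxE : `|x - E| <= E / (100 * 100) by apply/ler_normlP; split; lra.
rewrite normrM (ger0_norm q0) (le_trans (ler_pM _ _ hxE q4)) //.
have -> : E ^+ 3 / (20 * 100) = E / (100 * 100) * (4 * E ^+ 2) * (5 / 4).
  by rewrite exprSr; field.
rewrite -[leLHS]mulr1 ler_wpM2l //; last by lra.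
by rewrite mulr_ge0 ?mulr_ge0 ?sqr_ge0 //; lra.
Qed.

Section NearBasePoint.
Context {R : realType} {n : nat}.
Context {c T : R} {b e1 e2 : R * 'rV[R]_n -> R}.
Context {alpha a1 a2 a3 : 'rV[R]_n -> R} {xb : 'rV[R]_n} {W : set (R * 'rV[R]_n)}.
Hypotheses (c0 : 0 < c) (T0 : 0 < T) (xb0 : xb != 0).
Hypotheses (b_C2 : Ck 2 (txdom n c T) b) (W_nbhs : nbhs (0, xb) W).
Hypotheses (e1_cont : {for (0, xb), continuous e1})
           (e2_cont : {for (0, xb), continuous e2}).
Hypotheses (e1_pos : 0 < e1 (0, xb)) (e2_pos : 0 < e2 (0, xb)).
Hypotheses (alpha_xb : alpha xb = 0)
           (a1_xb : a1 xb = 0) (a2_xb : a2 xb = 0) (a3_xb : a3 xb = 0).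
(* the two factorisations combined: 27 b^2 = 4 a^3 - Delta *)
Hypothesis b_square : forall t xi, W (t, xi) ->
  27 * b (t, xi) ^+ 2 =
  4 * e1 (t, xi) ^+ 3 * (t + alpha xi) ^+ 3
  - e2 (t, xi) * cubic (a1 xi) (a2 xi) (a3 xi) t.

Let x0 : R * 'rV[R]_n := (0, xb).
Let D2 := 'D_tdir ('D_tdir b).
Let M := `|D2 x0| + 1.
Let k := e1 x0 ^+ 3.

Lemma box_estimates : exists2 r, 0 < r & forall t xi, `|t| < r -> `|xb - xi| < r ->
  [/\ W (t, xi), txdom n c T (t, xi), `|D2 (t, xi)| <= M,
      `|e1 (t, xi) ^+ 3 - k| <= k / (20 * 100)
    & `|e2 x0 - e2 (t, xi)| < e2 x0 / (100 * 100)].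
Proof.
have x0_dom : txdom n c T x0 by split => //=; rewrite oppr_lt0 c0 T0.
have near_cont (f : R * 'rV[R]_n -> R) eps : 0 < eps -> {for x0, continuous f} ->
    \forall y \near x0, `|f x0 - f y| < eps.
  move=> eps0 cf; have := cf (ball (f x0) eps) (nbhsx_ballx _ _ eps0).
  by rewrite -ball_normE.
have D2_cont : {for x0, continuous D2} := (b_C2.2 tdir).2 tdir x0 x0_dom.
have : \forall y \near x0, [/\ W y, `|D2 x0 - D2 y| < 1,
    `|e1 x0 - e1 y| < e1 x0 / (100 * 100) & `|e2 x0 - e2 y| < e2 x0 / (100 * 100)].
  near=> y; split; near: y; first exact: W_nbhs.
  - exact: near_cont.
  - by apply: near_cont; rewrite ?divr_gt0.
  - by apply: near_cont; rewrite ?divr_gt0.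
case/nbhs_ballP => r0 r0_pos r0_ball.
have xb_pos : 0 < `|xb| by rewrite normr_gt0.
pose r := Num.min r0 (Num.min c (Num.min T `|xb|)).
exists r; first by rewrite !lt_min r0_pos c0 T0 xb_pos.
move=> t xi t_r xi_r.
have [rr0 rc rT rxb] : [/\ r <= r0, r <= c, r <= T & r <= `|xb|].
  by rewrite !ge_min !lexx ?orbT.
have [Wy D2y e1y e2y] : [/\ W (t, xi), `|D2 x0 - D2 (t, xi)| < 1,
    `|e1 x0 - e1 (t, xi)| < e1 x0 / (100 * 100)
  & `|e2 x0 - e2 (t, xi)| < e2 x0 / (100 * 100)].
  apply: r0_ball; split; rewrite /= -ball_normE /ball_ /=.
    by rewrite sub0r normrN (lt_le_trans t_r).
  exact: lt_le_trans xi_r rr0.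
split => //.
- move: t_r; rewrite ltr_norml => /andP[t1 t2]; split => /=.
    by apply/andP; split; lra.
  apply/eqP => xi0; move: xi_r; rewrite xi0 subr0; lra.
- have := ler_normB (D2 x0) (D2 x0 - D2 (t, xi)).
  by rewrite opprB addrC subrK /M; lra.
- exact: cube_near.
Unshelve. all: by end_near.
Qed.

(* Along the ray xi = xb the factorisation reads 27 b^2 = (4 e1^3 - e2) t^3,
   so 4 e1^3 - e2 has the sign of t. *)
Lemma ray_sign {t : R} : W (t, xb) -> 0 <= (4 * e1 (t, xb) ^+ 3 - e2 (t, xb)) * t ^+ 3.
Proof.
move=> Wt; have := b_square t xb Wt.
rewrite alpha_xb a1_xb a2_xb a3_xb /cubic => sq.
have -> : (4 * e1 (t, xb) ^+ 3 - e2 (t, xb)) * t ^+ 3 = 27 * b (t, xb) ^+ 2.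
  by rewrite sq; ring.
by rewrite mulr_ge0 ?sqr_ge0.
Qed.

(* Hence e2(x0) = 4 e1(x0)^3 = 4 k, and e2 ~ 4 k on the box. *)
Lemma uniform_estimates : exists2 r, 0 < r & forall t xi, `|t| < r -> `|xb - xi| < r ->
  [/\ txdom n c T (t, xi), W (t, xi), `|D2 (t, xi)| <= M,
      `|e1 (t, xi) ^+ 3 - k| <= k / (20 * 100) & `|e2 (t, xi) - 4 * k| <= k / 250].
Proof.
have [r r_pos box] := box_estimates.
exists r => // t xi t_r xi_r.
have [Wt dom D2t e1t e2t] := box t xi t_r xi_r.
split => //.
have xb_r : `|xb - xb| < r by rewrite subrr normr0.
have hr_pos : 0 < r / 2 by rewrite divr_gt0.
have hr_r : `|r / 2| < r by rewrite gtr0_norm //; lra.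
have [Wp _ _ e1p e2p] := box _ _ hr_r xb_r.
have hr_m : `|- (r / 2)| < r by rewrite normrN.
have [Wm _ _ e1m e2m] := box _ _ hr_m xb_r.
have sign_p : e2 (r / 2, xb) <= 4 * e1 (r / 2, xb) ^+ 3.
  by have := ray_sign (t := r / 2) Wp; rewrite pmulr_lge0 ?exprn_gt0 // subr_ge0.
have sign_m : 4 * e1 (- (r / 2), xb) ^+ 3 <= e2 (- (r / 2), xb).
  have := ray_sign (t := - (r / 2)) Wm.
  rewrite (_ : (- (r / 2)) ^+ 3 = - (r / 2) ^+ 3); last by ring.
  by rewrite mulrN oppr_ge0 pmulr_lle0 ?exprn_gt0 // subr_le0.
move: e1t e1p e1m e2t e2p e2m.
move=> /ler_normlP[? ?] /ler_normlP[? ?] /ler_normlP[? ?].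
move=> /ltr_normlP[? ?] /ltr_normlP[? ?] /ltr_normlP[? ?].
by apply/ler_normlP; split; lra.
Qed.

Lemma no_uniformly_small_roots : exists2 r, 0 < r & forall xi,
  `|xb - xi| < r -> 0 < alpha xi < r ->
  forall n1 n2 n3 : R[i],
  (a1 xi)%:C%C = - (n1 + n2 + n3) -> (a2 xi)%:C%C = n1 * n2 + n1 * n3 + n2 * n3 ->
  (a3 xi)%:C%C = - (n1 * n2 * n3) ->
  Normc.normc n1 <= alpha xi / (100 * 100) ->
  Normc.normc n2 <= alpha xi / (100 * 100) ->
  Normc.normc n3 <= alpha xi / (100 * 100) -> False.
Proof.
have [r0 r0_pos est] := uniform_estimates.
have M_pos : 0 < M by have := normr_ge0 (D2 x0); rewrite /M; lra.
have k_pos : 0 < k by rewrite exprn_gt0.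
pose rho := k / (27 * (25 * 100)) / (4 * M ^+ 2).
have rho_pos : 0 < rho by rewrite !divr_gt0 ?mulr_gt0 ?exprn_gt0.
exists (Num.min r0 rho); first by rewrite lt_min r0_pos rho_pos.
move=> xi xi_r /andP[A_pos]; rewrite lt_min => /andP[A_r0 A_rho].
move=> n1 n2 n3 v1 v2 v3 h1 h2 h3.
have xi_r0 : `|xb - xi| < r0 by apply: lt_le_trans xi_r _; rewrite ge_min lexx.
have in_box s : -r0 < s < r0 -> `|s| < r0 by rewrite ltr_norml.
have small_A : 4 * M ^+ 2 * alpha xi <= k / (27 * (25 * 100)).
  move: A_rho; rewrite /rho ltr_pdivlMr ?mulr_gt0 ?exprn_gt0 // mulrC.
  exact: ltW.
have d0 : 0 <= 1 / (100 * 100) :> R by lra.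
have d1 : 1 / (100 * 100) <= 1 :> R by lra.
have near_cube u : `|u| <= alpha xi -> `|cubic (a1 xi) (a2 xi) (a3 xi) u - u ^+ 3|
    <= 7 / (100 * 100) * alpha xi ^+ 3.
  move=> u_A; have dA (m : R[i]) : Normc.normc m <= alpha xi / (100 * 100) ->
      Normc.normc m <= 1 / (100 * 100) * alpha xi by rewrite div1r mulrC.
  have := cubic_near_cube v1 v2 v3 d0 d1 (ltW A_pos) (dA _ h1) (dA _ h2) (dA _ h3) u_A.
  by rewrite div1r.
apply: (slice_contradiction (g := fun s => b (s, xi))
  (g1 := fun s => 'D_tdir b (s, xi)) (g2 := fun s => D2 (s, xi))
  (F := fun s => e1 (s, xi) ^+ 3) (G := fun s => e2 (s, xi))
  k_pos A_pos A_r0 small_A) near_cube => s /in_box s_r;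
  have [dom Ws D2s e1s e2s] := est s xi s_r xi_r0 => //.
- exact: is_derive_slice (b_C2.1 _ dom tdir).
- exact: is_derive_slice ((b_C2.2 tdir).1 _ dom tdir).
- exact: b_square.
Qed.

End NearBasePoint.

Lemma large_root {R : rcfType} (a1 a2 a3 A : R) : 0 <= A ->
  (0 < A -> forall n1 n2 n3 : R[i],
     a1%:C%C = - (n1 + n2 + n3) -> a2%:C%C = n1 * n2 + n1 * n3 + n2 * n3 ->
     a3%:C%C = - (n1 * n2 * n3) ->
     Normc.normc n1 <= A / (100 * 100) -> Normc.normc n2 <= A / (100 * 100) ->
     Normc.normc n3 <= A / (100 * 100) -> False) ->
  exists nu : R[i], cubic a1%:C%C a2%:C%C a3%:C%C nu = 0 /\
                    A <= 100 * 100 * Normc.normc nu.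
Proof.
move=> A_ge0 no_small.
have [n1 [n2 [n3 [v1 v2 v3]]]] := cubic_vieta _ a1%:C%C a2%:C%C a3%:C%C.
have [|] := boolP (has (fun m => A <= 100 * 100 * Normc.normc m) [:: n1; n2; n3]).
  case/hasP => m m_in m_large; exists m; split => //.
  by move: m_in; rewrite !inE => /or3P[] /eqP ->; rewrite /cubic v1 v2 v3; ring.
move/hasPn => not_large.
have small m : m \in [:: n1; n2; n3] -> Normc.normc m <= A / (100 * 100).
  by move/not_large; rewrite -ltNge => m_small; rewrite ler_pdivlMr // mulrC ltW.
have A_pos : 0 < A.
  have := not_large n1; rewrite inE eqxx -ltNge => /(_ isT).
  by apply: le_lt_trans; rewrite mulr_ge0 ?normc_ge0.
exfalso; apply: (no_small A_pos n1 n2 n3 v1 v2 v3).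
all: by apply: small; rewrite !inE eqxx ?orbT.
Qed.

Theorem lemma4p2 (R : realType) (n : nat) (c T : R)
  (a b : R * 'rV[R]_n -> R) (xb : 'rV[R]_n)
  (W : set (R * 'rV[R]_n)) (V : set 'rV[R]_n)
  (e1 e2 : R * 'rV[R]_n -> R) (alpha a1 a2 a3 : 'rV[R]_n -> R) :
  0 < c -> 0 < T ->
  (* a, b smooth on (-c,T) x (R^n \ {0}) *)
  smooth_on (txdom n c T) a -> smooth_on (txdom n c T) b ->
  (* homogeneous of degree 0 in xi *)
  (forall t xi (l : R), txdom n c T (t, xi) -> 0 < l ->
     a (t, l *: xi) = a (t, xi) /\ b (t, l *: xi) = b (t, xi)) ->
  (* Delta >= 0 for t in [0, T) *)
  (forall t xi, 0 <= t < T -> xi != 0 -> 0 <= disc a b (t, xi)) ->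
  (* |xb| = 1, a(0,xb) = 0, d_t a(0,xb) <> 0 *)
  eucl2 xb = 1 -> a (0, xb) = 0 ->
  (fun t => a (t, xb))^`() 0 != 0 ->
  (* local factorizations near (0,xb), resp. near xb *)
  open W -> W (0, xb) -> open V -> V xb ->
  smooth_on W e1 -> smooth_on W e2 ->
  (forall p, W p -> 0 < e1 p /\ 0 < e2 p) ->
  smooth_on V alpha -> smooth_on V a1 -> smooth_on V a2 -> smooth_on V a3 ->
  alpha xb = 0 -> (forall xi, V xi -> 0 <= alpha xi) ->
  a1 xb = 0 -> a2 xb = 0 -> a3 xb = 0 ->
  (forall p, W p -> a p = e1 p * (p.1 + alpha p.2)) ->
  (forall p, W p -> disc a b p =
     e2 p * (p.1 ^+ 3 + a1 p.2 * p.1 ^+ 2 + a2 p.2 * p.1 + a3 p.2)) ->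
  exists U : set 'rV[R]_n, nbhs xb U /\
  exists eps : R, 0 < eps /\
  forall xi, U xi ->
    exists nu : R[i],
      nu ^+ 3 + ((a1 xi)%:C)%C * nu ^+ 2 + ((a2 xi)%:C)%C * nu + ((a3 xi)%:C)%C = 0
      /\ alpha xi <= eps^-1 * Normc.normc nu.
Proof.
move=> c0 T0 _ b_smooth _ _ xb_unit _ _ W_open Wx0 V_open Vxb e1_smooth e2_smooth
  e_pos alpha_smooth _ _ _ alpha_xb alpha_ge0 a1_xb a2_xb a3_xb a_fact disc_fact.
have xb0 : xb != 0.
  apply/eqP => xb_eq0; move: xb_unit; rewrite xb_eq0 /eucl2 big1 => [/esym/eqP|i _].
    by rewrite oner_eq0.
  by rewrite mxE expr0n.
have b_square t xi : W (t, xi) -> 27 * b (t, xi) ^+ 2 =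
    4 * e1 (t, xi) ^+ 3 * (t + alpha xi) ^+ 3
    - e2 (t, xi) * cubic (a1 xi) (a2 xi) (a3 xi) t.
  by move=> Wt; have := disc_fact _ Wt; rewrite /disc (a_fact _ Wt) /cubic /= => <-; ring.
have [e1_pos e2_pos] := e_pos _ Wx0.
have [r r_pos no_small] := no_uniformly_small_roots c0 T0 xb0 (b_smooth 2%N)
  (open_nbhs_nbhs (conj W_open Wx0)) (e1_smooth 0%N _ Wx0) (e2_smooth 0%N _ Wx0)
  e1_pos e2_pos alpha_xb a1_xb a2_xb a3_xb b_square.
exists ([set xi | `|xb - xi| < r] `&` V `&` [set xi | `|alpha xb - alpha xi| < r]).
split.
  apply: filterI; [apply: filterI|].
  - by have := nbhsx_ballx xb r r_pos; rewrite -ball_normE.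
  - exact: open_nbhs_nbhs.
  - have := alpha_smooth 0%N xb Vxb (ball (alpha xb) r) (nbhsx_ballx _ _ r_pos).
    by rewrite -ball_normE.
exists (1 / (100 * 100)); split => // xi [[xi_r Vxi]].
rewrite /= alpha_xb sub0r normrN ger0_norm ?alpha_ge0 // => alpha_r.
rewrite div1r invrK; apply: large_root; first exact: alpha_ge0.
by move=> A_pos; apply: no_small => //; rewrite A_pos alpha_r.
Qed.
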